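(* Let $\mathcal{T}$ be a tangle of order $k$ in a connectivity system $(E,\lambda)$, and let $(A, B)$ and $(C, D)$ be two non-sequential $k$-separations of $\lambda$. Then $(A, B)$ is $\mathcal{T}$-equivalent to $(C, D)$ if and only if either $\mathrm{fcl}_{\mathcal{T}}(A)= \mathrm{fcl}_{\mathcal{T}}(C)$ or $\mathrm{fcl}_{\mathcal{T}}(A)= \mathrm{fcl}_{\mathcal{T}}(D)$.
   Context: A connectivity system is a pair $(E,\lambda)$ with $E$ finite and $\lambda$ an integer-valued symmetric submodular function on subsets of $E$. $X$ is $k$-separating if $\lambda(X)\le k$; a $k$-separation is an unordered partition $(X,E-X)$ with $\lambda(X)\le k$. A tangle of order $k$ is a collection $\mathcal T$ of subsets of $E$ with (T1) $\lambda(A)<k$ for $A\in\mathcal T$; (T2) if $\lambda(A)\le k-1$ then $A\in\mathcal T$ or $E-A\in\mathcal T$; (T3) $A\cup B\cup C\ne E$ for $A,B,C\in\mathcal T$; (T4) $E-\{e\}\notin\mathcal T$ for $e\in E$. A set is $\mathcal T$-weak if contained in a member of $\mathcal T$, and $\mathcal T$-strong otherwise. A $\mathcal T$-strong $k$-separating set $X$ is fully closed if $X\cup Y$ is not $k$-separating for every nonempty $\mathcal T$-weak $Y\subseteq E-X$; $\mathrm{fcl}_{\mathcal T}(X)$ is the intersection of all fully closed $k$-separating sets containing $X$. $\mathcal T$-strong $k$-separations $(X,Y),(X',Y')$ are $\mathcal T$-equivalent if $\{\mathrm{fcl}_{\mathcal T}(X),\mathrm{fcl}_{\mathcal T}(Y)\}=\{\mathrm{fcl}_{\mathcal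 T}(X'),\mathrm{fcl}_{\mathcal T}(Y')\}$. A $k$-separating set $X$ is $\mathcal T$-sequential if $E-X$ is $\mathcal T$-strong and $\mathrm{fcl}_{\mathcal T}(E-X)=E$; a $k$-separation is non-sequential if neither of its parts is $\mathcal T$-sequential (such separations are $\mathcal T$-strong). *)

From mathcomp Require Import all_boot all_order all_algebra.
Set Implicit Arguments. Unset Strict Implicit. Unset Printing Implicit Defensive.
Import Order.TTheory GRing.Theory Num.Theory.
Local Open Scope ring_scope.

Definition connectivity_system (E : finType) (lam : {set E} -> int) : Prop :=
  (forall X : {set E}, lam X = lam (~: X)) /\
  (forall X Y : {set E}, lam (X :|: Y) + lam (X :&: Y) <= lam X + lam Y).

Section Tangles.
Variables (E : finType) (lam : {set E} -> int) (k : int).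

Definition kseparating (X : {set E}) : bool := lam X <= k.

Definition kseparation (X Y : {set E}) : Prop := Y = ~: X /\ kseparating X.

Definition tangle (T : {set {set E}}) : Prop :=
  (forall A, A \in T -> lam A < k) /\
  (forall A, lam A <= k - 1 -> A \in T \/ ~: A \in T) /\
  (forall A B C, A \in T -> B \in T -> C \in T -> A :|: B :|: C != setT) /\
  (forall e : E, ~: [set e] \notin T).

Variable T : {set {set E}}.

Definition Tweak (X : {set E}) : bool := [exists A in T, X \subset A].
Definition Tstrong (X : {set E}) : bool := ~~ Tweak X.

Definition fully_closed (X : {set E}) : bool :=
  [&& Tstrong X, kseparating X &
   [forall Y : {set E}, [&& Y != set0, Tweak Y & Y \subset ~: X] ==>
      ~~ kseparating (X :|: Y)]].

Definition fcl (X : {set E}) : {set E} :=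
  \bigcap_(Z : {set E} | [&& fully_closed Z, kseparating Z & X \subset Z]) Z.

Definition Tequivalent (X Y X' Y' : {set E}) : Prop :=
  [set fcl X; fcl Y] = [set fcl X'; fcl Y'].

Definition Tsequential (X : {set E}) : Prop :=
  kseparating X /\ Tstrong (~: X) /\ fcl (~: X) = setT.

Definition nonsequential (X Y : {set E}) : Prop :=
  kseparation X Y /\ ~ Tsequential X /\ ~ Tsequential Y.

End Tangles.

From mathcomp Require Import all_boot all_order all_algebra.
From mathcomp Require Import zify.
Set Implicit Arguments. Unset Strict Implicit. Unset Printing Implicit Defensive.
Import Order.TTheory GRing.Theory Num.Theory.
Local Open Scope ring_scope.

(* For a T-strong k-separating set X, fcl X is obtained by greedily adding
   nonempty T-weak sets while staying k-separating.  Submodularity, together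
   with the fact that a set which is strong and has strong complement has
   connectivity at least k, shows that every fully closed Z containing X
   absorbs each added piece; so the greedy result S is fcl X.  Running the
   same uncrossing backwards, a fully closed set contains the complement of X
   iff it contains the complement of S, i.e. fcl (E - X) = fcl (E - fcl X)
   for a non-sequential separation (X, E - X). *)

Section Tangle.
Variables (E : finType) (lam : {set E} -> int) (k : int) (T : {set {set E}}).
Hypotheses (lamP : connectivity_system lam) (tangleT : tangle lam k T).

Local Notation ksep := (kseparating lam k).
Local Notation fclosed := (fully_closed lam k T).
Local Notation cl := (fcl lam k T).

Lemma Tweak_subset (X Y : {set E}) : Y \subset X -> Tweak T X -> Tweak T Y.
Proof.
move=> sYX /existsP [A /andP [AT sXA]]; apply/existsP; exists A.
by rewrite AT (subset_trans sYX sXA).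
Qed.

Lemma Tstrong_superset (X Y : {set E}) : X \subset Y -> Tstrong T X -> Tstrong T Y.
Proof. by move=> sXY; apply: contra; apply: Tweak_subset. Qed.

Lemma Tweak_mem (X : {set E}) : X \in T -> Tweak T X.
Proof. by move=> XT; apply/existsP; exists X; rewrite XT subxx. Qed.

Lemma kseparatingC (X : {set E}) : ksep X -> ksep (~: X).
Proof. by case: lamP => lamC _; rewrite /kseparating -lamC. Qed.

Lemma kseparatingT (X : {set E}) : ksep X -> ksep setT.
Proof.
case: lamP => lamC lam_sub; rewrite /kseparating => kX.
have := lam_sub X (~: X); rewrite setUCr setICr.
have := lamC set0; rewrite setC0 => ->; have := lamC X; lia.
Qed.

Lemma Tstrong2_lam_ge (X : {set E}) :
  Tstrong T X -> Tstrong T (~: X) -> k <= lam X.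
Proof.
case: tangleT => _ [T2 _] sX sCX; rewrite leNgt; apply/negP => lt_Xk.
have /T2 [/Tweak_mem wX | /Tweak_mem wCX] : lam X <= k - 1 by lia.
  by rewrite /Tstrong wX in sX.
by rewrite /Tstrong wCX in sCX.
Qed.

Lemma kseparatingU (X Y : {set E}) :
  ksep X -> ksep Y -> Tstrong T (X :&: Y) -> Tstrong T (~: (X :&: Y)) ->
  ksep (X :|: Y).
Proof.
rewrite /kseparating => kX kY sI sCI.
have := Tstrong2_lam_ge sI sCI; case: lamP => _ /(_ X Y); lia.
Qed.

Lemma fully_closed_Tstrong_compl (Z : {set E}) :
  fclosed Z -> Z != setT -> Tstrong T (~: Z).
Proof.
case/and3P=> _ kZ /forallP /(_ (~: Z)) closedZ nZT; apply/negP => wCZ.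
move: closedZ; rewrite wCZ subxx setUCr (kseparatingT kZ) andbT implybF.
by rewrite -(inj_eq (@setC_inj _)) setC0 setCK nZT.
Qed.

Lemma fully_closed_absorb (Z Y : {set E}) :
  fclosed Z -> ksep (Z :|: Y) -> Tweak T (Y :\: Z) -> Y \subset Z.
Proof.
case/and3P=> _ _ /forallP /(_ (Y :\: Z)) closedZ kZY wYZ.
apply/negPn/negP => /subsetPn [y yY ynZ].
have nYZ : Y :\: Z != set0 by apply/set0Pn; exists y; rewrite inE ynZ.
have eZY : Z :|: Y :\: Z = Z :|: Y.
  by apply/setP => x; rewrite !inE; case: (x \in Z).
by move: closedZ; rewrite nYZ wYZ subsetDr eZY kZY.
Qed.

Lemma Tweak_Tsequential (X : {set E}) : ksep X -> Tweak T X -> Tsequential lam k T X.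
Proof.
move=> kX wX; split=> //; split.
  apply/negP => /existsP [A2 /andP [A2T sCXA2]].
  case/existsP: wX => A1 /andP [A1T sXA1].
  case: tangleT => _ [_ [T3 _]]; move/negP: (T3 _ _ _ A1T A2T A2T); apply.
  rewrite -setUA setUid eqEsubset subsetT /= -(setUCr X).
  exact: setUSS.
apply: big1 => Z /and3P [fZ _ sCXZ]; apply/eqP/negPn/negP => nZT.
move/negP: (fully_closed_Tstrong_compl fZ nZT); apply.
by apply: Tweak_subset wX; rewrite -setCS setCK.
Qed.

Section WeakExtension.
Variable X : {set E}.
Hypotheses (sX : Tstrong T X) (kX : ksep X).

Inductive weak_ext : {set E} -> Prop :=
| weak_ext_refl : weak_ext X
| weak_extU S Y : weak_ext S -> Tweak T Y -> ksep (S :|: Y) -> weak_ext (S :|: Y).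

Lemma weak_ext_superset S : weak_ext S -> X \subset S.
Proof. by elim=> // S0 Y _ sXS0 _ _; rewrite (subset_trans sXS0) ?subsetUl. Qed.

Lemma weak_ext_kseparating S : weak_ext S -> ksep S.
Proof. by case. Qed.

Lemma weak_ext_Tstrong S : weak_ext S -> Tstrong T S.
Proof. by move/weak_ext_superset/Tstrong_superset; apply. Qed.

Lemma weak_ext_fully_closed : exists2 S, weak_ext S & fclosed S.
Proof.
suff: forall S, weak_ext S -> exists2 S', weak_ext S' & fclosed S'.
  by apply; constructor.
move=> S; have [n] := ubnP #|~: S|; elim: n S => // n IH S ltSn extS.
have [fS|] := boolP (fclosed S); first by exists S.
rewrite /fully_closed weak_ext_Tstrong // weak_ext_kseparating //=.
case/forallPn => Y; rewrite negb_imply negbK => /andP [/and3P [nY wY sYCS] kSY].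
apply: (IH (S :|: Y)); last exact: weak_extU.
rewrite -ltnS (leq_trans _ ltSn) // ltnS.
apply: proper_card; rewrite properC properUl //.
by apply: contra nY => sYS; rewrite -subset0 -(setICr S) subsetI sYS.
Qed.

Lemma weak_ext_subset_fully_closed S Z :
  weak_ext S -> fclosed Z -> X \subset Z -> S \subset Z.
Proof.
move=> extS fZ sXZ; have [-> | nZT] := eqVneq Z setT; first exact: subsetT.
have sCZ := fully_closed_Tstrong_compl fZ nZT.
elim: extS => // S0 Y extS0 sS0Z wY kS0Y.
have kZS : ksep (Z :|: (S0 :|: Y)).
  case/and3P: fZ => _ kZ _; apply: kseparatingU => //.
    apply: Tstrong_superset sX; rewrite subsetI sXZ.
    by rewrite (subset_trans (weak_ext_superset extS0)) ?subsetUl.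
  by apply: Tstrong_superset sCZ; rewrite setCS subsetIl.
apply: fully_closed_absorb kZS _ => //; apply: Tweak_subset wY.
by rewrite subDset setUSS.
Qed.

Lemma fcl_weak_ext S : weak_ext S -> fclosed S -> cl X = S.
Proof.
move=> extS fS; apply/eqP; rewrite eqEsubset; apply/andP; split.
  apply: bigcap_inf; rewrite fS weak_ext_superset //.
  by case/and3P: fS => _ ->.
by apply/bigcapsP => Z /and3P [fZ _ sXZ]; apply: weak_ext_subset_fully_closed.
Qed.

(* W (in use, the complement of the end of the chain) keeps the intersection
   in each uncrossing step strong. *)
Lemma compl_weak_ext_subset W Z S :
  fclosed Z -> Tstrong T W -> W \subset Z ->
  weak_ext S -> W \subset ~: S -> ~: S \subset Z -> ~: X \subset Z.
Proof.
move=> fZ sW sWZ; elim=> // S0 Y extS0 IH wY kS0Y sWCS sCSZ.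
have sWCS0 : W \subset ~: S0 by rewrite (subset_trans sWCS) // setCS subsetUl.
apply: IH => //; apply: (fully_closed_absorb fZ).
  case/and3P: fZ => _ kZ _.
  apply: kseparatingU => //; first exact/kseparatingC/weak_ext_kseparating.
    by apply: Tstrong_superset sW; rewrite subsetI sWZ.
  apply: Tstrong_superset sX; rewrite setCI setCK.
  by rewrite (subset_trans (weak_ext_superset extS0)) ?subsetUr.
apply: Tweak_subset wY; apply/subsetP => x; rewrite !inE => /andP [xnZ xnS0].
by apply: contraNT xnZ => xnY; apply: (subsetP sCSZ); rewrite !inE negb_or xnS0.
Qed.

End WeakExtension.

Lemma nonsequential_sym (X Y : {set E}) :
  nonsequential lam k T X Y -> nonsequential lam k T Y X.
Proof.
by case=> [[-> kX] [nsX nsY]]; split=> //; split; rewrite ?setCK ?kseparatingC.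
Qed.

Lemma fcl_nonsequential_compl (X Y : {set E}) :
  nonsequential lam k T X Y -> cl Y = cl (~: cl X).
Proof.
case=> [[-> kX] [nsX nsCX]].
have sX : Tstrong T X by apply/negP => /(Tweak_Tsequential kX).
have [S extS fS] := weak_ext_fully_closed sX kX.
rewrite (fcl_weak_ext sX extS fS).
have nST : S != setT.
  apply: contra_notN nsCX => /eqP eST; split; first exact: kseparatingC.
  by rewrite setCK (fcl_weak_ext sX extS fS).
have sCS := fully_closed_Tstrong_compl fS nST.
apply: eq_bigl => Z; have [fZ|//] := boolP (fclosed Z).
rewrite /=; case: (ksep Z) => //=; apply/idP/idP => sZ.
  by apply: subset_trans sZ; rewrite setCS (weak_ext_superset extS).
exact: (compl_weak_ext_subset sX kX fZ sCS sZ extS (subxx _) sZ).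
Qed.

End Tangle.

Theorem lemma3p7 (E : finType) (lam : {set E} -> int) (k : int)
  (T : {set {set E}}) (A B C D : {set E}) :
  connectivity_system lam ->
  tangle lam k T ->
  nonsequential lam k T A B ->
  nonsequential lam k T C D ->
  (Tequivalent lam k T A B C D <->
   (fcl lam k T A = fcl lam k T C \/ fcl lam k T A = fcl lam k T D)).
Proof.
move=> lamP tangleT nsAB nsCD; rewrite /Tequivalent; split.
  move=> eqAB; have : fcl lam k T A \in [set fcl lam k T C; fcl lam k T D].
    by rewrite -eqAB set21.
  by case/set2P; [left | right].
have eB := fcl_nonsequential_compl lamP tangleT nsAB.
have eD := fcl_nonsequential_compl lamP tangleT nsCD.
have eC := fcl_nonsequential_compl lamP tangleT (nonsequential_sym lamP nsCD).
case=> eA; rewrite eB eA; first by rewrite eD.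
by rewrite eC setUC.
Qed.
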